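(* Let $\mathbf X=(X_1,\dots,X_k)$, $2\le k\le n-1$, be homogeneous coordinates of proper cycles, $S$ a vector with $(S\mid S)\le0$, with $X_1,\dots,X_k,S$ linearly independent and $\Delta(\mathbf X,S)<0$. Let $y$ be a proper cycle with $y\notin\langle\mathbf x,s\rangle$ and $(Y\mid S)\neq0$. Then there exists a proper cycle $z\in\langle\mathbf x,s\rangle^\perp$ with $(Z\mid Y)=0$ if and only if $\delta(\mathbf x,y,s)\le0$.
   Context: Let $n\ge 3$. For $X=(\xi_0,\boldsymbol\xi_1,\xi_2,\xi_3)$ and $Y=(\eta_0,\boldsymbol\eta_1,\eta_2,\eta_3)$ in $\mathbb{R}^{n+3}=\mathbb{R}\times\mathbb{R}^n\times\mathbb{R}\times\mathbb{R}$, the Lie product is the nondegenerate symmetric bilinear form $(X\mid Y)=\xi_0\eta_2+\boldsymbol\xi_1\cdot\boldsymbol\eta_1+\xi_2\eta_0-\xi_3\eta_3$. Points of $\mathbb{P}^{n+2}$ are cycles; lowercase letters denote cycles and uppercase letters their homogeneous coordinate vectors; a cycle is proper if $(X\mid X)=0$. For a list $\mathbf X$, $\langle\mathbf X\rangle$ is its span, $\langle\mathbf x\rangle$ the projective subspace, $\langle\mathbf x\rangle^\perp$ the projectivization of $\{Y:(X_i\mid Y)=0\ \forall i\}$, and $\Delta(\mathbf X)=\det[(X_i\mid X_j)]$. The discriminant of $(\mathbf x,y,s)$ is $\delta(\mathbf x,y,s)=\Delta(\mathbf X,Y,S)/(\Delta(\mathbf X,S)\Delta(Y,S))$. (Geometrically: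 the cofamily $\langle\mathbf x,s\rangle^\perp\cap\Omega$ contains a cycle tangent to $y$.) *)

(* Vectors of R^{n+3} are row vectors 'rV[R]_(n.+3) over a
   real closed field R; coordinates: index 0 = xi_0, indices 1..n = bold xi_1,
   index n+1 = xi_2, index n+2 = xi_3. *)
From HB Require Import structures.
From mathcomp Require Import all_boot all_order all_algebra.
Set Implicit Arguments. Unset Strict Implicit. Unset Printing Implicit Defensive.
Import Order.TTheory GRing.Theory Num.Theory.
Local Open Scope ring_scope.

Definition lie (R : pzRingType) (n : nat) (X Y : 'rV[R]_(n.+3)) : R :=
  X 0 (inord 0) * Y 0 (inord n.+1)
  + \sum_(1 <= i < n.+1) X 0 (inord i) * Y 0 (inord i)
  + X 0 (inord n.+1) * Y 0 (inord 0)
  - X 0 (inord n.+2) * Y 0 (inord n.+2).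

Definition gram (R : comPzRingType) (n : nat) (s : seq 'rV[R]_(n.+3))
  : 'M[R]_(size s) :=
  \matrix_(i < size s, j < size s) lie (nth 0 s i) (nth 0 s j).

Definition Delta (R : comPzRingType) (n : nat) (s : seq 'rV[R]_(n.+3)) : R :=
  \det (gram s).

Definition proper_cycle (R : pzRingType) (n : nat) (X : 'rV[R]_(n.+3)) : Prop :=
  X != 0 /\ lie X X = 0.

Definition discr (R : fieldType) (n : nat) (X : seq 'rV[R]_(n.+3))
  (Y S : 'rV[R]_(n.+3)) : R :=
  Delta (X ++ [:: Y; S]) / (Delta (rcons X S) * Delta [:: Y; S]).

From HB Require Import structures.
From mathcomp Require Import all_boot all_order all_algebra.
From mathcomp Require Import fingroup perm ring lra zify.
Import Order.TTheory GRing.Theory Num.Theory.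
Local Open Scope ring_scope.
Set Implicit Arguments. Unset Strict Implicit. Unset Printing Implicit Defensive.

(* Let A be the matrix with rows X_1, ..., X_k, S.  The Lie product is a
   symmetric bilinear form of signature (n + 1, 2) on R^(n+3).

   1. Lorentzian frame.  Diagonalizing the Gram matrix of A by congruence gives
      an orthogonal basis B = T A of <x, s>.  The product of its norms has the
      sign of Delta(X, S) < 0, and at most two of them are negative since the
      form has negative index 2; so exactly one row of B is negative.
   2. Discriminant.  Let Y' be Y minus its orthogonal projection on <x, s>.
      Gram determinant manipulations give Delta(X, Y, S) = (Y'|Y') Delta(X, S),
      and Delta(Y, S) = -(Y|S)^2 as y is proper, so delta(x, y, s) <= 0 iff
      (Y'|Y') >= 0.  Also Y' <> 0 since y is not in <x, s>, and (Z|Y) = (Z|Y')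
      for every Z orthogonal to <x, s>.
   3. Isotropic vectors.  For Y' orthogonal to a Lorentzian frame, a proper
      cycle orthogonal to the frame and to Y' exists iff (Y'|Y') >= 0: a negative
      Y' together with the negative row and the cycle would contradict the
      negative index; otherwise the frame extended by Y' has a positive and a
      negative orthogonal vector (by the dimension bound k + 3 < n + 3), and the
      line they span meets the cone of proper cycles.
   The theorem follows by combining 2 and 3.  The argument does not use that
   the X_i are proper, that (S|S) <= 0, that the family is free or that k >= 2. *)

Section LieBilinear.
Variables (R : comRingType) (n : nat).
Local Notation vec := 'rV[R]_(n.+3).

Lemma lieC (u w : vec) : lie u w = lie w u.
Proof. by rewrite /lie; under eq_bigr => i _ do rewrite mulrC; ring. Qed.

Lemma lieDl (u v w : vec) : lie (u + v) w = lie u w + lie v w.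
Proof.
rewrite /lie !mxE; under eq_bigr => i _ do rewrite !mxE mulrDl.
by rewrite big_split /=; ring.
Qed.

Lemma lieZl a (u w : vec) : lie (a *: u) w = a * lie u w.
Proof.
rewrite /lie !mxE; under eq_bigr => i _ do rewrite !mxE -mulrA.
by rewrite -mulr_sumr /=; ring.
Qed.

Lemma lieDr (u v w : vec) : lie w (u + v) = lie w u + lie w v.
Proof. by rewrite lieC lieDl !(lieC w). Qed.

Lemma lieZr a (u w : vec) : lie w (a *: u) = a * lie w u.
Proof. by rewrite lieC lieZl lieC. Qed.

Lemma lie0l (w : vec) : lie 0 w = 0.
Proof. by rewrite -(scale0r 0) lieZl mul0r. Qed.

Lemma lieBl (u v w : vec) : lie (u - v) w = lie u w - lie v w.
Proof. by rewrite lieDl -scaleN1r lieZl mulN1r. Qed.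

Lemma lieBr (u v w : vec) : lie w (u - v) = lie w u - lie w v.
Proof. by rewrite lieC lieBl !(lieC w). Qed.

Lemma lie_rowcomb p (w : 'rV[R]_p) (M : 'M[R]_(p, n.+3)) (v : vec) :
  lie (w *m M) v = \sum_l w 0 l * lie (row l M) v.
Proof.
rewrite mulmx_sum_row; elim/big_rec2: _ => [|l x y _ <-]; first exact: lie0l.
by rewrite lieDl lieZl.
Qed.

Lemma lie_quad (a b : vec) t :
  lie (a + t *: b) (a + t *: b) = lie a a + 2 * t * lie a b + t ^+ 2 * lie b b.
Proof. by rewrite !(lieDl, lieDr, lieZl, lieZr) (lieC b a); ring. Qed.

End LieBilinear.

Section GramDeterminants.
Variables (R : comRingType) (n : nat).
Local Notation vec := 'rV[R]_(n.+3).

Definition rowsmx (s : seq vec) : 'M[R]_(size s, n.+3) :=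
  \matrix_(i, j) (nth 0 s i) 0 j.

Lemma row_rowsmx (s : seq vec) i : row i (rowsmx s) = nth 0 s i.
Proof. by apply/rowP => j; rewrite !mxE. Qed.

Definition gramM p (M : 'M[R]_(p, n.+3)) : 'M[R]_p :=
  \matrix_(i, j) lie (row i M) (row j M).

Lemma Delta_gramM (s : seq vec) : Delta s = \det (gramM (rowsmx s)).
Proof. by congr (\det _); apply/matrixP => i j; rewrite !mxE !row_rowsmx. Qed.

Lemma gramM_mul p q (T : 'M[R]_(q, p)) (M : 'M[R]_(p, n.+3)) :
  gramM (T *m M) = T *m gramM M *m T^T.
Proof.
apply/matrixP => i j; rewrite !mxE !row_mul lie_rowcomb.
under eq_bigr => l _ do rewrite lieC lie_rowcomb mulr_sumr.
rewrite exchange_big; apply: eq_bigr => k _; rewrite !mxE big_distrl.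
by apply: eq_bigr => l _; rewrite !mxE lieC /=; ring.
Qed.

Lemma det_gramM_unimodular p (Q : 'M[R]_p) (M : 'M[R]_(p, n.+3)) :
  \det Q ^+ 2 = 1 -> \det (gramM (Q *m M)) = \det (gramM M).
Proof. by move=> hQ; rewrite gramM_mul !det_mulmx det_tr mulrAC -expr2 hQ mul1r. Qed.

Lemma Delta_sized (s : seq vec) m (e : size s = m) :
  Delta s = \det (\matrix_(i < m, j < m) lie (nth 0 s i) (nth 0 s j)).
Proof. by case: m / e. Qed.

Lemma Delta_perm (s t : seq vec) : perm_eq s t -> Delta s = Delta t.
Proof.
move=> st; have /tuple_permP [sigma es] : perm_eq s (in_tuple t) by [].
rewrite (Delta_sized (perm_size st)) [Delta t](Delta_sized (erefl (size t))).
set G := \matrix_(i, j) lie (nth 0 t i) (nth 0 t j).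
have -> : \matrix_(i, j) lie (nth 0 s i) (nth 0 s j) = row_perm sigma (col_perm sigma G).
  by apply/matrixP => i j; rewrite !mxE es !nth_mktuple !(tnth_nth 0).
rewrite row_permE col_permE !det_mulmx !det_perm odd_permV mulrCA -expr2.
by rewrite sqrr_sign mulr1.
Qed.

Lemma Delta2 (u w : vec) : Delta [:: u; w] = lie u u * lie w w - lie u w * lie w u.
Proof.
rewrite /Delta (expand_det_row _ 0) !big_ord_recl big_ord0 addr0.
by rewrite /cofactor !det_mx11 !mxE /= /bump /= expr0 expr1; ring.
Qed.

Definition perp p (M : 'M[R]_(p, n.+3)) (u : vec) := forall i, lie (row i M) u = 0.

Lemma perp_comb p (M : 'M[R]_(p, n.+3)) (w : 'rV[R]_p) u :
  perp M u -> lie (w *m M) u = 0.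
Proof. by move=> hM; rewrite lie_rowcomb big1 // => l _; rewrite hM mulr0. Qed.

Lemma perp_mulmx p q (T : 'M[R]_(q, p)) (M : 'M[R]_(p, n.+3)) u :
  perp M u -> perp (T *m M) u.
Proof. by move=> hM i; rewrite row_mul perp_comb. Qed.

Lemma perp_lin p (M : 'M[R]_(p, n.+3)) u v a :
  perp M u -> perp M v -> perp M (u + a *: v).
Proof. by move=> hu hv i; rewrite lieDr lieZr hu hv mulr0 addr0. Qed.

Lemma perp_col_mx p q (A : 'M[R]_(p, n.+3)) (B : 'M[R]_(q, n.+3)) u :
  perp (col_mx A B) u <-> perp A u /\ perp B u.
Proof.
split=> [h | [hA hB] i]; first by split=> i; [rewrite -(rowKu _ A B) | rewrite -(rowKd _ A B)].
by rewrite -(splitK i); case: (split i) => j /=; rewrite ?rowKu ?rowKd.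
Qed.

Lemma perp_rowsmx (s : seq vec) u :
  perp (rowsmx s) u <-> (forall W, W \in s -> lie W u = 0).
Proof.
split=> [h W /(nthP 0) [i hi <-] | h i]; last by rewrite row_rowsmx h ?mem_nth.
by rewrite -(h (Ordinal hi)) row_rowsmx.
Qed.

Lemma rowsmx_cons (Y : vec) (s : seq vec) : rowsmx (Y :: s) = col_mx Y (rowsmx s).
Proof.
by apply/matrixP => i j; rewrite !mxE; case: splitP => k ->; rewrite ?ord1 ?mxE.
Qed.

Lemma Delta_cons_shift (Y : vec) (s : seq vec) (v : 'rV[R]_(size s)) :
  Delta ((Y + v *m rowsmx s) :: s) = Delta (Y :: s).
Proof.
rewrite !Delta_gramM !rowsmx_cons.
have -> : col_mx (Y + v *m rowsmx s) (rowsmx s) = block_mx 1%:M v 0 1%:M *m col_mx Y (rowsmx s).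
  by rewrite mul_block_col !mul1mx mul0mx add0r.
by rewrite det_gramM_unimodular // (@det_ublock _ 1) !det1 mulr1 expr1n.
Qed.

Lemma Delta_cons_perp (Y : vec) (s : seq vec) :
  perp (rowsmx s) Y -> Delta (Y :: s) = lie Y Y * Delta s.
Proof.
move=> hY; rewrite !Delta_gramM rowsmx_cons.
have -> : gramM (col_mx Y (rowsmx s)) = block_mx (lie Y Y)%:M 0 0 (gramM (rowsmx s)).
  apply/matrixP => i j; rewrite -(splitK i) -(splitK j).
  case: (split i) => k; case: (split j) => l /=; rewrite mxE ?rowKu ?rowKd.
  all: rewrite ?block_mxEul ?block_mxEur ?block_mxEdl ?block_mxEdr ?mxE ?ord1 ?row_id //.
  by rewrite lieC hY.
by rewrite (@det_ublock _ 1) det_scalar1.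
Qed.

End GramDeterminants.

Section CongruenceDiagonalization.
Variable R : numFieldType.

Lemma conj_entry p q r (A : 'M[R]_(p, q)) (G : 'M[R]_q) (B : 'M[R]_(r, q)) i j :
  (A *m G *m B^T) i j = (row i A *m G *m (row j B)^T) 0 0.
Proof. by rewrite !mxE; apply: eq_bigr => l _; rewrite -row_mul !mxE. Qed.

Lemma conj_sym p q (A : 'M[R]_(p, q)) (G : 'M[R]_q) :
  G^T = G -> (A *m G *m A^T)^T = A *m G *m A^T.
Proof. by move=> sym; rewrite !trmx_mul trmxK sym mulmxA. Qed.

Lemma congr_pivot_diag m (G : 'M[R]_m.+1) i :
  G i i != 0 -> exists2 T, T \in unitmx & (T *m G *m T^T) 0 0 != 0.
Proof.
move=> Gii; exists (tperm_mx 0 i); first exact: unitmx_perm.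
by rewrite tr_tperm_mx -xrowE -xcolE /xcol /xrow !mxE tpermL.
Qed.

(* A nonzero symmetric matrix is congruent to one with a nonzero corner entry;
   if the diagonal vanishes, 1 + E_ij first creates the diagonal entry 2 G i j. *)
Lemma congr_pivot m (G : 'M[R]_m.+1) :
  G^T = G -> G != 0 -> exists2 T, T \in unitmx & (T *m G *m T^T) 0 0 != 0.
Proof.
move=> sym nz.
have [/existsP [i Gii]|/existsPn diag0] := boolP [exists i, G i i != 0].
  exact: congr_pivot_diag Gii.
have /existsP [i /existsP [j Gij]] : [exists i, exists j, G i j != 0].
  apply: contraR nz => /existsPn H; apply/eqP/matrixP => i j; rewrite mxE.
  by move: (H i) => /existsPn /(_ j) /negbNE /eqP.
have {diag0} [Gii Gjj] : G i i = 0 /\ G j j = 0 by split; apply/eqP/negbNE/diag0.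
pose D := delta_mx i j : 'M[R]_m.+1.
have DD : D *m D = 0.
  rewrite /D mul_delta_mx_cond; case: eqP => // ji.
  by move: Gij; rewrite ji Gii eqxx.
pose T0 := 1%:M + D.
have uT0 : T0 \in unitmx.
  have : T0 *m (1%:M - D) = 1%:M.
    by rewrite /T0 mulmxDl !mulmxBr !mul1mx !mulmx1 DD subr0 subrK.
  by case/mulmx1_unit.
have rowT0 : row i T0 = delta_mx 0 i + delta_mx 0 j.
  by rewrite /T0 rowE mulmxDr mulmx1 /D mul_delta_mx.
have Gji : G j i = G i j by rewrite -[in LHS]sym mxE.
have : (T0 *m G *m T0^T) i i != 0.
  rewrite conj_entry rowT0 [(_ + _)^T]linearD /= !trmx_delta mulmxDl !mulmxDr.
  rewrite -!rowE -!colE !mxE Gii Gjj Gji add0r addr0 -mulr2n.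
  by rewrite mulrn_eq0 /= Gij.
case/congr_pivot_diag => T1 uT1 H; exists (T1 *m T0); first by rewrite unitmx_mul uT1 uT0.
by rewrite trmx_mul !mulmxA in H *.
Qed.

(* One step of symmetric Gaussian elimination: clearing the first row and
   column of G1 leaves the Schur complement in the lower right block. *)
Lemma congr_schur m (G1 : 'M[R]_(1 + m)) :
  G1^T = G1 -> G1 0 0 != 0 ->
  block_mx 1%:M 0 (- ((G1 0 0)^-1 *: dlsubmx G1)) 1%:M *m G1 *m
    (block_mx 1%:M 0 (- ((G1 0 0)^-1 *: dlsubmx G1)) 1%:M)^T =
    block_mx (ulsubmx G1) 0 0 (drsubmx G1 - (G1 0 0)^-1 *: (dlsubmx G1 *m ursubmx G1)).
Proof.
move=> sym nz; set T := block_mx _ _ _ _.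
set a := ulsubmx G1; set b := ursubmx G1; set c := dlsubmx G1; set C := drsubmx G1.
have aE : a = (G1 0 0)%:M.
  by rewrite [a]mx11_scalar /a !mxE; congr (_%:M); congr (G1 _ _); exact: val_inj.
have cb : c^T = b.
  move: sym; rewrite -[G1]submxK tr_block_mx => /eq_block_mx [_ h _ _].
  by rewrite -/c -/b h.
rewrite -{1}[G1]submxK -/a -/b -/c -/C /T tr_block_mx !trmx1 !trmx0 !mulmx_block.
rewrite !(mul1mx, mul0mx, mulmx1, mulmx0, addr0, add0r).
rewrite aE mul_scalar_mx mul_mx_scalar !scalerN !scalerA mulfV // !scale1r addNr.
rewrite [(- _)^T]linearN /= [(_ *: c)^T]linearZ /= cb scalerN scalerA mulfV //.
by rewrite scale1r addNr mul0mx add0r mulNmx -scalemxAl addrC.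
Qed.

Lemma congr_diag m (G : 'M[R]_m) :
  G^T = G -> exists2 T : 'M[R]_m, T \in unitmx &
    forall i j, i != j -> (T *m G *m T^T) i j = 0.
Proof.
elim: m G => [|m IH] G sym; first by exists 1%:M; [exact: unitmx1 | case].
have [G0|nz] := eqVneq G 0.
  by exists 1%:M => [|i j _]; rewrite ?unitmx1 // G0 mulmx0 mul0mx mxE.
have [T1 uT1 piv] := congr_pivot sym nz.
pose G1 : 'M[R]_(1 + m) := T1 *m G *m T1^T.
have sym1 : G1^T = G1 by exact: conj_sym.
have := congr_schur sym1 piv.
set T2 := block_mx _ _ _ _; set C := (_ - _ : 'M_m) => E2.
have symC : C^T = C.
  by have := conj_sym T2 sym1; rewrite E2 tr_block_mx => /eq_block_mx [_ _ _ ->].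
have [T3 uT3 D3] := IH C symC.
pose T4 : 'M[R]_(1 + m) := block_mx 1%:M 0 0 T3.
exists (T4 *m T2 *m T1).
  have dT4 : \det T4 = \det T3 by rewrite det_lblock det1 mul1r.
  have dT2 : \det T2 = 1 by rewrite det_lblock !det1 mul1r.
  by rewrite !unitmx_mul uT1 andbT !unitmxE dT4 dT2 unitr1 andbT -unitmxE.
have -> : T4 *m T2 *m T1 *m G *m (T4 *m T2 *m T1)^T = T4 *m (T2 *m G1 *m T2^T) *m T4^T.
  by rewrite /G1 !trmx_mul !mulmxA.
rewrite E2 /T4 tr_block_mx !trmx1 !trmx0 !mulmx_block.
rewrite !(mul1mx, mul0mx, mulmx1, mulmx0, addr0, add0r).
move=> i0 j0; have [i ->] : exists i : 'I_(1 + m), i0 = i by exists i0.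
have [j ->] : exists j : 'I_(1 + m), j0 = j by exists j0.
rewrite -(splitK i) -(splitK j).
case: (split i) => i'; case: (split j) => j' /=.
- by rewrite !ord1 eqxx.
- by move=> _; rewrite (@block_mxEur _ 1 m 1 m) mxE.
- by move=> _; rewrite (@block_mxEdl _ 1 m 1 m) mxE.
- move=> ne; rewrite (@block_mxEdr _ 1 m 1 m); apply: D3.
  by apply: contraNneq ne => ->.
Qed.

End CongruenceDiagonalization.

Lemma exists_left_kernel (F : fieldType) p r (K : 'M[F]_(p, r)) :
  (r < p)%N -> exists2 w : 'rV[F]_p, w != 0 & w *m K = 0.
Proof.
move=> rp; have : kermx K != 0.
  rewrite -mxrank_eq0 mxrank_ker subn_eq0 -ltnNge.
  exact: leq_ltn_trans (rank_leq_col K) rp.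
by case/rowV0Pn => w; rewrite sub_kermx => /eqP wK wnz; exists w.
Qed.

Lemma exists_perp (F : fieldType) n p (M : 'M[F]_(p, n.+3)) :
  (p < n.+3)%N -> exists2 u, u != 0 & perp M u.
Proof.
move=> hp; pose K : 'M[F]_(n.+3, p) := \matrix_(j, i) lie (delta_mx 0 j) (row i M).
have [u unz /rowP uK] := exists_left_kernel K hp; exists u => // i.
have -> : lie (row i M) u = (u *m K) 0 i.
  rewrite lieC -{1}[u]mulmx1 lie_rowcomb !mxE.
  by apply: eq_bigr => j _; rewrite row1 !mxE.
by rewrite uK mxE.
Qed.

Lemma perp_unitmx (F : fieldType) n p (T : 'M[F]_p) (A : 'M[F]_(p, n.+3)) u :
  T \in unitmx -> perp (T *m A) u <-> perp A u.
Proof.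
move=> uT; split=> [|]; last exact: perp_mulmx.
by rewrite -{2}(mulKmx uT A); exact: perp_mulmx.
Qed.

Section OrthogonalProjection.
Variables (R : fieldType) (n : nat).
Local Notation vec := 'rV[R]_(n.+3).

(* Orthogonal projection onto the span of an orthogonal non-isotropic basis. *)
Definition frame_proj p (B : 'M[R]_(p, n.+3)) (u : vec) : vec :=
  \row_i (lie u (row i B) / lie (row i B) (row i B)) *m B.

Lemma lie_sub_proj_perp p (B : 'M[R]_(p, n.+3)) (z u : vec) :
  perp B z -> lie z (u - frame_proj B u) = lie z u.
Proof. by move=> zB; rewrite lieBr (lieC z (frame_proj B u)) (perp_comb _ zB) subr0. Qed.

Section Projection.
Variables (p : nat) (B : 'M[R]_(p, n.+3)).
Hypothesis orthB : forall i j, i != j -> lie (row i B) (row j B) = 0.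
Hypothesis nonisoB : forall i, lie (row i B) (row i B) != 0.

Lemma lie_comb_row (w : 'rV[R]_p) i :
  lie (w *m B) (row i B) = w 0 i * lie (row i B) (row i B).
Proof.
by rewrite lie_rowcomb (bigD1 i) //= big1 ?addr0 // => l li; rewrite orthB // mulr0.
Qed.

Lemma perp_sub_proj u : perp B (u - frame_proj B u).
Proof.
move=> i; rewrite lieBr (lieC _ (_ *m B)) lie_comb_row mxE.
by rewrite divfK // lieC subrr.
Qed.

Lemma lie_sub_proj u :
  lie (u - frame_proj B u) (u - frame_proj B u) =
  lie u u - \sum_i lie u (row i B) ^+ 2 / lie (row i B) (row i B).
Proof.
rewrite lieBl (perp_comb _ (perp_sub_proj u)) subr0.
rewrite lieBr lieC lie_rowcomb; congr (_ - _); apply: eq_bigr => l _.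
by rewrite mxE lieC mulrAC -expr2.
Qed.

End Projection.

Lemma span_rowsmx (s : seq vec) (r : 'rV[R]_(size s)) : r *m rowsmx s \in <<s>>%VS.
Proof.
rewrite mulmx_sum_row; apply: rpred_sum => l _; apply: rpredZ.
by rewrite row_rowsmx memv_span ?mem_nth.
Qed.

(* For a basis B = T *m rowsmx s of the span of s, the residual of u differs
   from u by a combination of s; so it is nonzero when u is not in that span. *)
Lemma sub_proj_rowsmx (s : seq vec) (T : 'M[R]_(size s)) (u : vec) :
  exists v, u - frame_proj (T *m rowsmx s) u = u + v *m rowsmx s.
Proof. by eexists; rewrite /frame_proj mulmxA -mulNmx. Qed.

Lemma sub_proj_neq0 (s : seq vec) (T : 'M[R]_(size s)) (u : vec) :
  u \notin <<s>>%VS -> u - frame_proj (T *m rowsmx s) u != 0.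
Proof.
have [v ->] := sub_proj_rowsmx T u; apply: contra => /eqP u0.
by rewrite -[u]subr0 -u0 opprD addrA subrr add0r rpredN span_rowsmx.
Qed.

End OrthogonalProjection.

Section NegativeIndex.
Variables (R : realFieldType) (n : nat).
Local Notation vec := 'rV[R]_(n.+3).

(* On the codimension-2 subspace {xi_3 = 0, xi_0 = xi_2} the Lie product is
   2 xi_0^2 + |xi_1|^2, hence positive definite. *)
Lemma lie_posdef_slice (u : vec) :
  u 0 (inord n.+2) = 0 -> u 0 (inord 0) = u 0 (inord n.+1) -> lie u u <= 0 -> u = 0.
Proof.
rewrite /lie => h3 h02; rewrite h3 -h02 mulr0 subr0.
set a : R := u 0 (inord 0); set s := \sum_(_ <= i < _) _ => h.
have sq_ge0 (x : R) : 0 <= x * x by rewrite -expr2 sqr_ge0.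
have hs : 0 <= s by apply: sumr_ge0 => i _.
have a0 : a = 0.
  have ha := sq_ge0 a; have : a * a = 0 by lra.
  by move/eqP; rewrite mulf_eq0 orbb => /eqP.
have coord0 i : (1 <= i < n.+1)%N -> u 0 (inord i) = 0.
  move=> hi; have ha := sq_ge0 a; have s0 : s = 0 by lra.
  move/eqP: s0; rewrite psumr_eq0 // => /allP /(_ i).
  by rewrite mem_index_iota hi => /(_ isT) /eqP /eqP; rewrite mulf_eq0 orbb => /eqP.
apply/rowP => j; rewrite mxE -[j]inord_val.
case: j => [[|k] /= hk]; first exact: a0.
have [kn|kn] := ltnP k n; first by apply: coord0; lia.
have [-> | kn1] := eqVneq k n; first by rewrite -h02.
by have -> : k = n.+1 by move/eqP: kn1; lia.
Qed.

(* Some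
   nontrivial combination of them lies in the positive definite slice. *)
Lemma lie_negative_index (u1 u2 u3 : vec) :
  lie u1 u1 < 0 -> lie u2 u2 < 0 -> lie u3 u3 <= 0 ->
  lie u1 u2 = 0 -> lie u1 u3 = 0 -> lie u2 u3 = 0 -> u3 = 0.
Proof.
move=> h1 h2 h3 o12 o13 o23.
pose K : 'M[R]_(3, 2) := \matrix_(i, j)
  (let v := nth 0 [:: u1; u2; u3] i in
   if j == 0 then v 0 (inord n.+2) else v 0 (inord 0) - v 0 (inord n.+1)).
have [w wnz /rowP wK] := exists_left_kernel K isT.
have := wK 0; have := wK 1; rewrite !mxE !big_ord_recl !big_ord0 !mxE /=.
set a : R := w 0 0; set b : R := w 0 (lift 0 0); set c : R := w 0 (lift 0 (lift 0 0)).
move=> e1 e0.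
pose u := a *: u1 + b *: u2 + c *: u3.
have Luu : lie u u = a * a * lie u1 u1 + b * b * lie u2 u2 + c * c * lie u3 u3.
  rewrite /u !(lieDl, lieDr, lieZl, lieZr) (lieC u2 u1) (lieC u3 u1) (lieC u3 u2).
  by rewrite o12 o13 o23; ring.
have sq_ge0 (x : R) : 0 <= x * x by rewrite -expr2 sqr_ge0.
have t1 := mulr_ge0_le0 (sq_ge0 a) (ltW h1).
have t2 := mulr_ge0_le0 (sq_ge0 b) (ltW h2).
have t3 := mulr_ge0_le0 (sq_ge0 c) h3.
have u0 : u = 0.
  by apply: lie_posdef_slice; rewrite ?Luu ?mxE; lra.
have Lu0 : lie u u = 0 by rewrite u0 lie0l.
have a0 : a = 0.
  have /eqP : a * a * lie u1 u1 = 0 by lra.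
  by rewrite !mulf_eq0 orbb (negbTE (ltr0_neq0 h1)) orbF => /eqP.
have b0 : b = 0.
  have /eqP : b * b * lie u2 u2 = 0 by lra.
  by rewrite !mulf_eq0 orbb (negbTE (ltr0_neq0 h2)) orbF => /eqP.
apply/eqP; apply: contraNT wnz => u3nz.
have c0 : c = 0.
  move/eqP: u0; rewrite /u a0 b0 !scale0r !add0r scaler_eq0 (negbTE u3nz) orbF.
  by move/eqP.
apply/eqP/rowP => j; rewrite mxE.
by case: j => [[|[|[|j]]] hj] //; [rewrite -a0 | rewrite -b0 | rewrite -c0];
  congr (w 0 _); apply: val_inj.
Qed.

Lemma inord_eqE m a b : (a < m.+1)%N -> (b < m.+1)%N ->
  ((inord a : 'I_m.+1) == inord b) = (a == b).
Proof. by move=> ha hb; rewrite -(inj_eq val_inj) /= !inordK. Qed.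

(* The vectors with xi_0 = s, xi_2 = -s, xi_3 = t and xi_1 = 0 form a negative
   definite plane, the complement of the positive definite slice above. *)
Definition timelike (s t : R) : vec :=
  \row_j (if j == inord 0 then s else if j == inord n.+1 then - s
          else if j == inord n.+2 then t else 0).

Lemma lie_timelike s t (w : vec) :
  lie (timelike s t) w = s * w 0 (inord n.+1) - s * w 0 (inord 0) - t * w 0 (inord n.+2).
Proof.
rewrite /lie !mxE !eqxx !inord_eqE //= big1_seq ?addr0; last first.
  move=> i /andP [_]; rewrite mem_index_iota => /andP [h1 h2].
  rewrite !mxE !inord_eqE ?(ltn_trans h2) //.
  have -> : (i == 0)%N = false by case: i h1 h2.
  have -> : (i == n.+1)%N = false by apply/negbTE; rewrite neq_ltn h2.
  have -> : (i == n.+2)%N = false by apply/negbTE; rewrite neq_ltn (ltn_trans h2).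
  by rewrite mul0r.
by rewrite gtn_eqF //; ring.
Qed.

Lemma exists_timelike_perp (b : vec) : exists u : vec, lie u u < 0 /\ lie u b = 0.
Proof.
have [s [t [st0 ub]]] : exists s t : R, [/\ (s != 0) || (t != 0) & lie (timelike s t) b = 0].
  set b0 := b 0 (inord 0); set b1 := b 0 (inord n.+1); set b2 := b 0 (inord n.+2).
  have [h|] := boolP ((b2 != 0) || (b1 - b0 != 0)).
    by exists b2, (b1 - b0); split => //; rewrite lie_timelike -/b0 -/b1 -/b2; ring.
  rewrite negb_or !negbK subr_eq0 => /andP [/eqP h2 /eqP h10].
  by exists 1, 0; rewrite oner_eq0 lie_timelike -/b0 -/b1 -/b2 h2 h10; split => //; ring.
exists (timelike s t); split => //.
have : 0 < s ^+ 2 + t ^+ 2.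
  by case/orP: st0 => h; [apply: ltr_pwDl | apply: ltr_pwDr];
    rewrite ?sqr_ge0 // lt_def sqr_ge0 expf_neq0.
rewrite lie_timelike !mxE !eqxx !inord_eqE //= gtn_eqF // mulrN.
by have := sqr_ge0 s; rewrite !expr2 => s2 st2; lra.
Qed.

End NegativeIndex.

Lemma one_negative (R : realDomainType) p (d : 'I_p -> R) :
  \prod_i d i < 0 ->
  (forall i j l, i != j -> i != l -> j != l -> d i < 0 -> d j < 0 -> d l < 0 -> False) ->
  exists j, d j < 0 /\ forall i, i != j -> 0 < d i.
Proof.
move=> hP no3.
have [/existsP [j dj]|/existsPn hn] := boolP [exists j, d j < 0]; last first.
  have : 0 <= \prod_i d i by apply: prodr_ge0 => i _; rewrite leNgt hn.
  by rewrite leNgt hP.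
exists j; split => // i ij; rewrite lt_def; apply/andP; split.
  by apply: contraTneq hP => di0; rewrite (bigD1 i) //= di0 mul0r ltxx.
rewrite leNgt; apply/negP => di.
have rest : 0 <= \prod_(l | (l != j) && (l != i)) d l.
  apply: prodr_ge0 => l /andP [lj li]; rewrite leNgt; apply/negP => dl.
  by apply: (no3 j i l) => //; rewrite eq_sym.
move: hP; rewrite (bigD1 j) //= (bigD1 i) //= mulrA; apply/negP; rewrite -leNgt.
by rewrite mulr_ge0 // ltW // nmulr_rgt0.
Qed.

Section LorentzFrames.
Variables (R : realFieldType) (n : nat).
Local Notation vec := 'rV[R]_(n.+3).

Definition lorentz_frame p (B : 'M[R]_(p, n.+3)) (j0 : 'I_p) : Prop :=
  [/\ forall i j, i != j -> lie (row i B) (row j B) = 0,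
      lie (row j0 B) (row j0 B) < 0
    & forall i, i != j0 -> 0 < lie (row i B) (row i B)].

Lemma det_gramM_orthogonal p (B : 'M[R]_(p, n.+3)) :
  (forall i j, i != j -> lie (row i B) (row j B) = 0) ->
  \det (gramM B) = \prod_i lie (row i B) (row i B).
Proof.
move=> hB; rewrite det_trig; last first.
  by apply/is_trig_mxP => i j ij; rewrite mxE hB // neq_ltn ij.
by apply: eq_bigr => i _; rewrite mxE.
Qed.

(* A family with negative Gram determinant has a Lorentzian orthogonal basis:
   diagonalize the Gram matrix by congruence; the diagonal has negative product
   and, by lie_negative_index, at most two negative entries. *)
Lemma lorentz_frame_of_gram p (A : 'M[R]_(p, n.+3)) :
  \det (gramM A) < 0 -> exists T : 'M[R]_p, exists j0,
    T \in unitmx /\ lorentz_frame (T *m A) j0.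
Proof.
move=> hA.
have gram_sym : (gramM A)^T = gramM A by apply/matrixP => i j; rewrite !mxE lieC.
have [T uT diagT] := congr_diag gram_sym.
set B := T *m A.
have orthB i j : i != j -> lie (row i B) (row j B) = 0.
  by move=> ij; have := diagT i j ij; rewrite -gramM_mul mxE.
have prodB : \prod_i lie (row i B) (row i B) < 0.
  rewrite -det_gramM_orthogonal // gramM_mul !det_mulmx det_tr mulrAC -expr2.
  by rewrite pmulr_rlt0 // exprn_even_gt0 //= -unitfE -unitmxE.
have [|j0 [neg pos]] := one_negative prodB; last by exists T, j0.
move=> i j l ij il jl di dj dl.
have := lie_negative_index di dj (ltW dl) (orthB _ _ ij) (orthB _ _ il) (orthB _ _ jl).
by move: dl => /[swap] ->; rewrite lie0l ltxx.
Qed.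

Lemma lorentz_frame_noniso p (B : 'M[R]_(p, n.+3)) j0 :
  lorentz_frame B j0 -> forall i, lie (row i B) (row i B) != 0.
Proof.
case=> _ neg pos i; have [->|ij0] := eqVneq i j0; first exact: ltr0_neq0.
exact/lt0r_neq0/pos.
Qed.

Lemma lorentz_frame_col_mx p (B : 'M[R]_(p, n.+3)) j0 (y : vec) :
  lorentz_frame B j0 -> perp B y -> 0 < lie y y ->
  lorentz_frame (col_mx B y) (lshift 1 j0).
Proof.
case=> orthB neg pos yB ypos; split; first 1 last.
- by rewrite rowKu.
- move=> i; rewrite -(splitK i); case: (split i) => k /=; rewrite ?rowKu ?rowKd ?row_id //.
  by move=> kj0; apply: pos; apply: contraNneq kj0 => ->.
move=> i j; rewrite -(splitK i) -(splitK j).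
case: (split i) => k; case: (split j) => l /=; rewrite ?rowKu ?rowKd ?row_id.
- by move=> kl; apply: orthB; apply: contraNneq kl => ->.
- by move=> _; rewrite yB.
- by move=> _; rewrite lieC yB.
- by rewrite !ord1 eqxx.
Qed.

(* The orthogonal complement of a Lorentzian frame contains a negative vector:
   take a negative vector orthogonal to the timelike row b_j0 and subtract its
   projection, which only decreases its square since the other rows are positive. *)
Lemma exists_timelike_perp_frame p (B : 'M[R]_(p, n.+3)) j0 :
  lorentz_frame B j0 -> exists2 c : vec, perp B c & lie c c < 0.
Proof.
move=> fB; have [orthB _ pos] := fB; have noniso := lorentz_frame_noniso fB.
have [u [uneg ub0]] := exists_timelike_perp (row j0 B).
exists (u - frame_proj B u); first exact: perp_sub_proj.
rewrite lie_sub_proj //; apply: le_lt_trans uneg; rewrite gerBl.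
apply: sumr_ge0 => i _; have [->|ij0] := eqVneq i j0; first by rewrite ub0 expr0n mul0r.
by rewrite divr_ge0 ?sqr_ge0 // ltW // pos.
Qed.

End LorentzFrames.

Section IsotropicVectors.
Variables (R : rcfType) (n : nat).
Local Notation vec := 'rV[R]_(n.+3).

Lemma isotropic_on_line (d c : vec) :
  lie d c = 0 -> lie c c < 0 -> 0 < lie d d -> exists t, proper_cycle (d + t *: c).
Proof.
move=> dc cneg dpos; pose t := Num.sqrt (lie d d / - lie c c).
have t2 : t ^+ 2 = lie d d / - lie c c.
  by rewrite sqr_sqrtr // divr_ge0 ?ltW // oppr_gt0.
exists t; split.
  apply: contraTneq dpos => z0; rewrite -leNgt.
  have : lie (d + t *: c) d = lie d d by rewrite lieDl lieZl lieC dc mulr0 addr0.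
  by rewrite z0 lie0l => <-.
by rewrite lie_quad dc mulr0 addr0 t2; field; exact: ltr0_neq0.
Qed.

(* Fewer than n + 2 vectors spanning a Lorentzian subspace have a common
   orthogonal proper cycle: a positive vector d and a negative vector c, both
   orthogonal to the frame and to each other, span a line through one. *)
Lemma exists_isotropic_perp q (B : 'M[R]_(q, n.+3)) j0 :
  (q.+1 < n.+3)%N -> lorentz_frame B j0 -> exists z, proper_cycle z /\ perp B z.
Proof.
move=> hq fB; have [_ neg _] := fB.
have [c cB cneg] := exists_timelike_perp_frame fB.
have hq1 : (q + 1 < n.+3)%N by rewrite addn1.
have [d dnz /perp_col_mx [dB dc]] := exists_perp (col_mx B c) hq1.
have {}dc : lie d c = 0 by rewrite lieC -(row_id 0 c) dc.
have dpos : 0 < lie d d.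
  rewrite ltNge; apply: contra dnz => dneg; apply/eqP.
  by apply: (lie_negative_index neg cneg dneg); rewrite ?cB ?dB // lieC.
have [t zt] := isotropic_on_line dc cneg dpos.
by exists (d + t *: c); split => //; exact: perp_lin.
Qed.

(* If (y|y) < 0 then y, the
   timelike row and the cycle would contradict lie_negative_index; if y is
   isotropic it is itself such a cycle; if (y|y) > 0, extend the frame by y. *)
Lemma isotropic_perp_iff p (B : 'M[R]_(p, n.+3)) j0 (y : vec) :
  (p.+2 < n.+3)%N -> lorentz_frame B j0 -> perp B y -> y != 0 ->
  (exists z, [/\ proper_cycle z, perp B z & lie z y = 0]) <-> 0 <= lie y y.
Proof.
move=> hp fB yB ynz; have [_ neg _] := fB; split.
  case=> z [[znz zz] zB zy]; rewrite leNgt; apply: contra znz => yneg; apply/eqP.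
  by apply: (lie_negative_index neg yneg); rewrite ?zz ?yB ?zB // lieC.
rewrite le_eqVlt => /orP [/eqP y0 | ypos].
  by exists y; split => //; rewrite -y0.
have hp1 : ((p + 1).+1 < n.+3)%N by rewrite addn1.
have [z [zp /perp_col_mx [zB zy]]] :=
  exists_isotropic_perp hp1 (lorentz_frame_col_mx fB yB ypos).
by exists z; split => //; rewrite lieC -(row_id 0 y) zy.
Qed.

End IsotropicVectors.

Section Discriminant.
Variables (R : fieldType) (n : nat).
Local Notation vec := 'rV[R]_(n.+3).

(* If Y is isotropic and Y' = Y + (combination of X, S) is orthogonal to X and S,
   then delta(x, y, s) = - (Y'|Y') / (Y|S)^2: Delta(X, Y, S) = (Y'|Y') Delta(X, S)
   and Delta(Y, S) = - (Y|S)^2. *)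
Lemma discr_perp_part (X : seq vec) (Y S Y' : vec) (v : 'rV[R]_(size (rcons X S))) :
  Y' = Y + v *m rowsmx (rcons X S) -> perp (rowsmx (rcons X S)) Y' -> lie Y Y = 0 ->
  Delta (rcons X S) != 0 -> lie Y S != 0 ->
  discr X Y S = - lie Y' Y' / lie Y S ^+ 2.
Proof.
move=> Y'E Y'perp YY DXS YS; rewrite /discr.
have -> : Delta (X ++ [:: Y; S]) = Delta (Y :: rcons X S).
  by apply: Delta_perm; rewrite -cats1 -cat1s perm_catCA.
rewrite -(Delta_cons_shift Y v) -Y'E Delta_cons_perp // Delta2 YY mul0r (lieC S Y).
by field; rewrite oppr_eq0 mulf_neq0 ?YS ?DXS.
Qed.

End Discriminant.

Theorem mainTheorem9 (R : rcfType) (n : nat) (X : seq 'rV[R]_(n.+3))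
  (S Y : 'rV[R]_(n.+3)) :
  (3 <= n)%N ->
  (2 <= size X)%N -> (size X <= n - 1)%N ->
  (forall Xi, Xi \in X -> proper_cycle Xi) ->
  lie S S <= 0 ->
  free (rcons X S) ->
  Delta (rcons X S) < 0 ->
  proper_cycle Y ->
  Y \notin <<rcons X S>>%VS ->
  lie Y S != 0 ->
  (exists Z : 'rV[R]_(n.+3),
      [/\ proper_cycle Z, (forall W, W \in rcons X S -> lie W Z = 0) & lie Z Y = 0])
  <-> discr X Y S <= 0.
Proof.
move=> n3 _ Xn _ _ _ DXS [_ YY] Ynot YS.
set A := rowsmx (rcons X S).
have := DXS; rewrite Delta_gramM => /lorentz_frame_of_gram [T [j0 [uT fB]]].
set B := T *m A; have [orthB _ _] := fB.
have perpXS z : (forall W, W \in rcons X S -> lie W z = 0) <-> perp B z.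
  by rewrite -perp_rowsmx perp_unitmx.
set Y' := Y - frame_proj B Y.
have Y'B : perp B Y' := perp_sub_proj orthB (lorentz_frame_noniso fB) Y.
have Y'A : perp A Y' by rewrite -(perp_unitmx _ _ uT).
have [v Y'E] := sub_proj_rowsmx T Y.
rewrite (discr_perp_part Y'E Y'A YY (ltr0_neq0 DXS) YS) mulNr oppr_le0.
rewrite pmulr_lge0 ?invr_gt0 ?exprn_even_gt0 //.
have sizeB : ((size (rcons X S)).+2 < n.+3)%N by rewrite size_rcons; lia.
rewrite -(isotropic_perp_iff sizeB fB Y'B (sub_proj_neq0 T Ynot)).
split=> -[z [zp zB zY]]; exists z.
  by have /perpXS zB' := zB; split=> //; rewrite lie_sub_proj_perp.
by split=> //; [apply/perpXS | rewrite -(lie_sub_proj_perp Y zB)].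
Qed.
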